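(* Let $f_0, g_0, \omega > 0$, let $p,q>0$ with $pq>1$, and let $C_p, C_q > 0$. Let $T>0$ and let $(f,g) \in \big(C^1([0,T))\big)^2$ be non-negative functions solving \[ \begin{cases} \frac{d}{dt} f(t) + \frac{\omega}{q+1} f(t) = (p+1) C_p\, g(t)^p, & t \in [0,T),\\ \frac{d}{dt} g(t) + \frac{\omega}{p+1} g(t) = (q+1) C_q\, f(t)^q, & t \in [0,T),\\ f(0) = f_0,\quad g(0) = g_0. \end{cases} \] Then for all $0 \le t < T$, \[ C_q f(t)^{q+1} e^{\omega t} - C_q f_0^{q+1} = C_p g(t)^{p+1} e^{\omega t} - C_p g_0^{p+1}. \] Moreover, if \[ \max\Big( 2^{\frac{p+1}{q+1}\frac{pq}{pq-1}} (q+1)^{-\frac{p+1}{pq-1}} (p+1)^{-\frac{p+1}{pq-1}} \omega^{\frac{p+1}{pq-1}} C_p^{-\frac{1}{pq-1}} C_q^{-\frac{p}{pq-1}},\ C_q^{-\frac{1}{q+1}} C_p^{\frac{1}{q+1}} g_0^{\frac{p+1}{q+1}} \Big) < f_0, \] then for all $0 \le t < T$, \[ e^{\frac{\omega}{p+1} t} g(t) \ge \Big\{ \Big(\frac{C_p}{C_q}\Big)^{\frac{pq-1}{(p+1)(q+1)}} f_0^{-\frac{pq-1}{p+1}} - 2^{-\frac{pq}{q+1}} (q+1)(p+1)\omega^{-1} C_q^{\frac{1}{q+1}} C_p^{\frac{q}{q+1}} \Big(1 - e^{-\frac{\omega(pq-1)}{(p+1)(q+1)} t}\Big) \Big\}^{-\frac{q+1}{pq-1}}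 - \big( C_q C_p^{-1} f_0^{q+1} - g_0^{p+1} \big)^{\frac{1}{p+1}}, \] and \[ T \le -\frac{(q+1)(p+1)}{\omega(pq-1)} \log\Big( 1 - \frac{2^{\frac{pq}{q+1}}}{(q+1)(p+1)}\, \omega\, C_q^{-\frac{p}{p+1}} C_p^{-\frac{1}{p+1}} f_0^{-\frac{pq-1}{p+1}} \Big). \] *)

From HB Require Import structures.
From mathcomp Require Import all_boot all_order all_algebra.
From mathcomp Require Import all_classical all_reals all_analysis.
Set Implicit Arguments. Unset Strict Implicit. Unset Printing Implicit Defensive.
Import Order.TTheory GRing.Theory Num.Theory.
Import numFieldNormedType.Exports.
Local Open Scope classical_set_scope.
Local Open Scope ring_scope.

Definition C1_Ico {R : realType} (T : R) (f f' : R -> R) : Prop :=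
  (forall t, 0 < t < T -> is_derive t 1 f (f' t)) /\
  ((fun h => h^-1 * (f h - f 0)) @ at_right 0 --> f' 0) /\
  {within `[0, T[, continuous f'}.

From HB Require Import structures.
From mathcomp Require Import all_boot all_order all_algebra.
From mathcomp Require Import all_classical all_reals all_analysis.
From mathcomp Require Import ring lra.
Import Order.TTheory GRing.Theory Num.Theory.
Import numFieldNormedType.Exports.
Local Open Scope classical_set_scope.
Local Open Scope ring_scope.

(* Multiplying the equation for f by (q+1) Cq f^q e^(wt) and the one for g by
   (p+1) Cp g^p e^(wt) gives equal right-hand sides, so
   e^(wt) (Cq f^(q+1) - Cp g^(p+1)) is constant.
   The second term of the max bounding f0 says exactly that
   K = Cq/Cp f0^(q+1) - g0^(p+1) > 0. For u = e^(wt/(p+1)) g + K^(1/(p+1)),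
   convexity of x^(p+1) and the identity give u^(p+1) <= 2^p Cq/Cp e^(wt) f^(q+1),
   which turns the equation for g into the Bernoulli inequality
   u' >= D e^(-ct) u^(1+b), b = (pq-1)/(q+1). Integrating it,
   0 < u^(-b) <= A - B (1 - e^(-ct)): this is the lower bound on g, and the first
   term of the max says A < B, so the right-hand side vanishes at the claimed
   bound on T. *)

Section calculus.
Context {R : realType}.
Implicit Types (a b d k l r x : R) (h : R -> R).

Lemma itv_ltW {a b t : R} : a < t < b -> a <= t < b.
Proof. by case/andP=> /ltW -> ->. Qed.

Lemma C1_Ico_cvg_right0 T h (dh : R -> R) : C1_Ico T h dh -> h x @[x --> 0^'+] --> h 0.
Proof.
move=> [_ [dq _]].
have : (fun x => h 0 + x * (x^-1 * (h x - h 0))) @ 0^'+ --> h 0 + 0 * dh 0.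
  by apply: cvgD; [exact: cvg_cst | apply: cvgM => //; exact: cvg_at_right_filter].
rewrite mul0r addr0; apply: cvg_trans; apply: near_eq_cvg; near=> x.
have x_gt0 : 0 < x by near: x; exact: nbhs_right_gt.
by rewrite mulrA mulfV ?gt_eqF // mul1r addrC subrK.
Unshelve. all: end_near. Qed.

Lemma is_derive_continuous {x h d} : is_derive x 1 h d -> {for x, continuous h}.
Proof. by move=> [h_x _]; exact/differentiable_continuous/derivable1_diffP. Qed.

Lemma is_derive_cvg_right {x h d} : is_derive x 1 h d -> h y @[y --> x^'+] --> h x.
Proof. by move/is_derive_continuous; exact: cvg_at_right_filter. Qed.

Lemma is_derive_powR {x} r {h d} : 0 < h x -> is_derive x 1 h d ->
  is_derive x 1 (fun t => h t `^ r) (r * h x `^ (r - 1) * d).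
Proof. by move=> hx hd; have := is_derive1_comp (is_derive1_powR r hx) hd. Qed.

Lemma powRD1 x r : 0 < x -> x `^ (r + 1) = x `^ r * x.
Proof. by move=> x_gt0; rewrite powRD ?powRr1 ?(ltW x_gt0) // lt0r_neq0 ?implybT. Qed.

Lemma is_derive_expRM x k : is_derive x 1 (fun t => expR (k * t)) (k * expR (k * x)).
Proof.
have := is_derive1_comp (is_derive_expR (k * x)) (is_deriveZ k (is_derive_id x 1)).
by rewrite (_ : k%:A = k) 1?mulrC //; exact: mulr1.
Qed.

Lemma is_derive_expRM_mul {x} k {h d} : is_derive x 1 h d ->
  is_derive x 1 (fun t => expR (k * t) * h t) (expR (k * x) * (d + k * h x)).
Proof.
move=> hd; apply: (is_derive_eq (is_deriveM (is_derive_expRM x k) hd)).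
by rewrite /GRing.scale /=; ring.
Qed.

Lemma ger0_derive_left_end_le {a b : R} {h dh : R -> R} :
  (forall t, a < t < b -> is_derive t 1 h (dh t)) ->
  (forall t, a < t < b -> 0 <= dh t) ->
  h x @[x --> a^'+] --> h a ->
  forall t, a <= t < b -> h a <= h t.
Proof.
move=> hdh dh_ge0 h_cont t /andP[]; rewrite le_eqVlt => /predU1P[<- // | at_ tb].
have le_ht s : a < s <= t -> h s <= h t.
  move=> /andP[as_ st]; apply: (@ger0_derive1_le_oo _ h a b) => //.
  - by move=> y /[!in_itv] /= /hdh [].
  - move=> y /[!in_itv] /= ay; have hy := hdh y ay.
    by rewrite derive1E derive_val dh_ge0.
  - by move=> y; rewrite inE /= in_itv /= => /hdh /is_derive_continuous.
  - by rewrite in_itv /= as_ (le_lt_trans st tb).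
  - by rewrite in_itv /= at_ tb.
apply: (ler_cvg_to h_cont (cvg_cst (h t))); near=> s; apply: le_ht.
apply/andP; split; first by near: s; exact: nbhs_right_gt.
by apply/ltW; near: s; exact: nbhs_right_lt.
Unshelve. all: end_near. Qed.

Lemma derive0_left_end_eq {a b : R} {h : R -> R} :
  (forall t, a < t < b -> is_derive t 1 h 0) -> h x @[x --> a^'+] --> h a ->
  forall t, a <= t < b -> h t = h a.
Proof.
move=> h'0 h_cont t tab; apply/eqP; rewrite eq_le.
rewrite (ger0_derive_left_end_le (dh := fun=> 0) h'0 (fun _ _ => lexx 0) h_cont t tab).
rewrite andbT -lerN2.
apply: (ger0_derive_left_end_le (h := fun t => - h t) (dh := fun=> 0) _ _ _ t tab) => //.
- by move=> s /h'0 /is_deriveN; rewrite oppr0.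
- exact: cvgN.
Qed.

Lemma cvg_right_powR a h l r :
  0 < l -> h x @[x --> a^'+] --> l -> h x `^ r @[x --> a^'+] --> l `^ r.
Proof.
move=> l_gt0 hl; have hc := is_derive_continuous (is_derive1_powR r l_gt0).
exact: (continuous_cvg _ hc hl).
Qed.

Lemma gt0_linear_supersolution {T k : R} {h dh : R -> R} :
  (forall t, 0 < t < T -> is_derive t 1 h (dh t)) ->
  (forall t, 0 < t < T -> 0 <= dh t + k * h t) ->
  h x @[x --> 0^'+] --> h 0 -> 0 < h 0 ->
  forall t, 0 <= t < T -> 0 < h t.
Proof.
move=> h' h'_ge h_cont h0_gt0 t tT.
have : expR (k * 0) * h 0 <= expR (k * t) * h t.
  apply: (ger0_derive_left_end_le (h := fun t => expR (k * t) * h t)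
    (dh := fun t => expR (k * t) * (dh t + k * h t)) _ _ _ t tT).
  - by move=> s /h'; exact: is_derive_expRM_mul.
  - by move=> s /h'_ge; apply: mulr_ge0; exact: expR_ge0.
  - by apply: cvgM => //; exact: is_derive_cvg_right (is_derive_expRM 0 k).
rewrite mulr0 expR0 mul1r => /(lt_le_trans h0_gt0).
by rewrite pmulr_rgt0 // expR_gt0.
Qed.

Lemma bernoulli_supersolution_bound {T b c D : R} {u du : R -> R} :
  0 < b -> 0 < c ->
  (forall t, 0 <= t < T -> 0 < u t) ->
  (forall t, 0 < t < T -> is_derive t 1 u (du t)) ->
  u x @[x --> 0^'+] --> u 0 ->
  (forall t, 0 < t < T -> D * expR (- c * t) * u t `^ (1 + b) <= du t) ->
  forall t, 0 <= t < T ->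
    u t `^ (- b) <= u 0 `^ (- b) - b * D / c * (1 - expR (- c * t)).
Proof.
move=> b_gt0 c_gt0 u_gt0 u' u_cont u'_ge t tT.
pose phi s := b * D / c * expR (- c * s) - u s `^ (- b).
suff : phi 0 <= phi t by rewrite /phi mulr0 expR0 mulr1; lra.
apply: (ger0_derive_left_end_le
  (dh := fun s => b * (u s `^ (- b - 1) * du s - D * expR (- c * s))) _ _ _ t tT).
- move=> s sT; have us := u_gt0 s (itv_ltW sT).
  have := is_deriveB (is_deriveZ (b * D / c) (is_derive_expRM s (- c)))
    (is_derive_powR (- b) us (u' s sT)).
  move/is_derive_eq; apply.
  by rewrite /GRing.scale /=; field; rewrite gt_eqF.
- move=> s sT; have us := u_gt0 s (itv_ltW sT).
  rewrite mulr_ge0 ?(ltW b_gt0) // subr_ge0.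
  have powR_cancel : u s `^ (- b - 1) * u s `^ (1 + b) = 1.
    rewrite -powRD; last by rewrite (lt0r_neq0 us) implybT.
    by rewrite (_ : _ + _ = 0) ?powRr0 //; ring.
  apply: le_trans (ler_wpM2l (powR_ge0 _ _) (u'_ge s sT)).
  by rewrite mulrCA powR_cancel mulr1.
- apply: cvgB.
    apply: cvgM; first exact: cvg_cst.
    exact: is_derive_cvg_right (is_derive_expRM 0 (- c)).
  apply: cvg_right_powR => //; apply: u_gt0.
  by case/andP: tT => t_ge0 tT; rewrite lexx (le_lt_trans t_ge0 tT).
Qed.

Lemma lifespan_le {T A B c : R} :
  0 < A < B -> 0 < c ->
  (forall t, 0 <= t < T -> 0 < A - B * (1 - expR (- c * t))) ->
  T <= - c^-1 * ln (1 - A / B).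
Proof.
move=> /andP[A_gt0 AB] c_gt0 Psi_gt0; rewrite leNgt; apply/negP => Tlt.
have B_gt0 : 0 < B := lt_trans A_gt0 AB.
have AB1 : 0 < 1 - A / B by rewrite subr_gt0 ltr_pdivrMr // mul1r.
have : 0 <= - c^-1 * ln (1 - A / B) < T.
  rewrite Tlt andbT mulNr -mulrN mulr_ge0 ?invr_ge0 ?(ltW c_gt0) // oppr_ge0.
  by rewrite ln_le0 // gerBl divr_ge0 // ltW.
move/Psi_gt0; rewrite mulrA mulrNN mulfV ?gt_eqF // mul1r lnK ?posrE //.
by rewrite subKr mulrC divfK ?gt_eqF // subrr ltxx.
Qed.

Lemma powR_superadditive {a b r : R} : 0 < a -> 0 < b -> 1 <= r ->
  a `^ r + b `^ r <= (a + b) `^ r.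
Proof.
move=> a_gt0 b_gt0 r_ge1; set s := a + b.
have s_gt0 : 0 < s by rewrite addr_gt0.
have part_le x : 0 < x <= s -> (x / s) `^ r <= x / s.
  move=> /andP[x_gt0 xs]; apply: ge1r_powR => //.
  by rewrite divr_gt0 //= ler_pdivrMr // mul1r.
have a_le : (a / s) `^ r <= a / s by apply: part_le; rewrite a_gt0 lerDl ltW.
have b_le : (b / s) `^ r <= b / s by apply: part_le; rewrite b_gt0 lerDr ltW.
have ea : a = a / s * s by rewrite divfK ?gt_eqF.
have eb : b = b / s * s by rewrite divfK ?gt_eqF.
have a_s_ge0 : 0 <= a / s by rewrite divr_ge0 // ltW.
have b_s_ge0 : 0 <= b / s by rewrite divr_ge0 // ltW.
rewrite {1}ea {1}eb (powRM _ a_s_ge0 (ltW s_gt0)) (powRM _ b_s_ge0 (ltW s_gt0)).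
apply: (le_trans (lerD (ler_wpM2r (powR_ge0 _ _) a_le) (ler_wpM2r (powR_ge0 _ _) b_le))).
by rewrite -mulrDl -mulrDl divff ?gt_eqF // mul1r.
Qed.

Lemma powR_midpoint_convex {a b r : R} : 0 <= a -> 0 <= b -> 1 <= r ->
  ((a + b) / 2) `^ r <= (a `^ r + b `^ r) / 2.
Proof.
move=> a_ge0 b_ge0 r_ge1.
have half_ge0 : (0:R) <= 2^-1 by rewrite invr_ge0.
have half_le1 : (2:R)^-1 <= 1 by rewrite invf_le1 // ler1n.
have := convex_powR r_ge1 (Itv01 half_ge0 half_le1) (x := a) (y := b).
rewrite !inE /= !in_itv /= !andbT => /(_ a_ge0 b_ge0) convex; cbn in convex.
have onem_half : unstable.onem (2^-1 : R) = 2^-1 by rewrite /unstable.onem; field.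
rewrite onem_half in convex.
by rewrite !(mulrC _ 2^-1) !mulrDr.
Qed.

Lemma ler_via_ln {k a b x y : R} : a <= b -> 0 < k -> 0 < a -> 0 < b -> 0 < x -> 0 < y ->
  ln y - ln x = k * (ln b - ln a) -> x <= y.
Proof.
move=> ab k_gt0 a_gt0 b_gt0 x_gt0 y_gt0 e.
by rewrite -ler_ln ?posrE // -subr_ge0 e mulr_ge0 // ?(ltW k_gt0) // subr_ge0 ler_ln ?posrE.
Qed.

Lemma ltr_via_ln {k a b x y : R} : a < b -> 0 < k -> 0 < a -> 0 < b -> 0 < x -> 0 < y ->
  ln y - ln x = k * (ln b - ln a) -> x < y.
Proof.
move=> ab k_gt0 a_gt0 b_gt0 x_gt0 y_gt0 e.
by rewrite -ltr_ln ?posrE // -subr_gt0 e mulr_gt0 // subr_gt0 ltr_ln ?posrE.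
Qed.

End calculus.

(* Every inequality below between products of real powers of positive numbers is
   proved on logarithms (ler_via_ln, ltr_via_ln), where it becomes a linear
   identity in the logarithms of the factors that [field] checks. *)
Ltac positivity := rewrite ?posrE; solve [repeat first
  [ assumption | exact: ltr0Sn | apply: mulr_gt0 | apply: addr_gt0
  | apply: powR_gt0 | apply: expR_gt0 | rewrite invr_gt0 ]].

Ltac ln_expand := repeat first
  [ rewrite expRK | rewrite ln_powR
  | rewrite lnM; [|positivity|positivity] | rewrite lnV; [|positivity] ].

Section coupled_system.
Variables (R : realType) (w p q Cp Cq T : R) (f g f' g' : R -> R).
Hypotheses (w_gt0 : 0 < w) (p_gt0 : 0 < p) (q_gt0 : 0 < q).
Hypotheses (Cp_gt0 : 0 < Cp) (Cq_gt0 : 0 < Cq).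
Hypotheses (f_C1 : C1_Ico T f f') (g_C1 : C1_Ico T g g').
Hypotheses (f0_gt0 : 0 < f 0) (g0_gt0 : 0 < g 0).
Hypothesis f_ode : forall t, 0 <= t < T ->
  f' t + w / (q + 1) * f t = (p + 1) * Cp * g t `^ p.
Hypothesis g_ode : forall t, 0 <= t < T ->
  g' t + w / (p + 1) * g t = (q + 1) * Cq * f t `^ q.

Let p1_gt0 : 0 < p + 1. Proof. by rewrite addr_gt0. Qed.
Let q1_gt0 : 0 < q + 1. Proof. by rewrite addr_gt0. Qed.

Lemma ode_f_gt0 t : 0 <= t < T -> 0 < f t.
Proof.
apply: (gt0_linear_supersolution (k := w / (q + 1)) (proj1 f_C1)) => //.
- move=> s /itv_ltW /f_ode ->.
  by apply: mulr_ge0; [apply: mulr_ge0; exact: ltW | exact: powR_ge0].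
- exact: C1_Ico_cvg_right0 f_C1.
Qed.

Lemma ode_g_gt0 t : 0 <= t < T -> 0 < g t.
Proof.
apply: (gt0_linear_supersolution (k := w / (p + 1)) (proj1 g_C1)) => //.
- move=> s /itv_ltW /g_ode ->.
  by apply: mulr_ge0; [apply: mulr_ge0; exact: ltW | exact: powR_ge0].
- exact: C1_Ico_cvg_right0 g_C1.
Qed.

Lemma ode_energy_identity t : 0 <= t < T ->
  Cq * f t `^ (q + 1) * expR (w * t) - Cq * f 0 `^ (q + 1)
  = Cp * g t `^ (p + 1) * expR (w * t) - Cp * g 0 `^ (p + 1).
Proof.
move=> tT; pose E s := Cq * f s `^ (q + 1) - Cp * g s `^ (p + 1).
have E' s : 0 < s < T -> is_derive s 1 E
    (Cq * ((q + 1) * f s `^ q * f' s) - Cp * ((p + 1) * g s `^ p * g' s)).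
  move=> sT; have sT' := itv_ltW sT.
  have := is_deriveB
    (is_deriveZ Cq (is_derive_powR (q + 1) (ode_f_gt0 _ sT') (proj1 f_C1 s sT)))
    (is_deriveZ Cp (is_derive_powR (p + 1) (ode_g_gt0 _ sT') (proj1 g_C1 s sT))).
  by rewrite !addrK.
have E_cont : E x @[x --> 0^'+] --> E 0.
  apply: cvgB; (apply: cvgM; first exact: cvg_cst); apply: cvg_right_powR => //.
    exact: C1_Ico_cvg_right0 f_C1.
  exact: C1_Ico_cvg_right0 g_C1.
have : expR (w * t) * E t = expR (w * 0) * E 0.
  apply: (derive0_left_end_eq (h := fun s => expR (w * s) * E s) _ _ t tT).
  - move=> s sT; have sT' := itv_ltW sT.
    apply: (is_derive_eq (is_derive_expRM_mul w (E' s sT))).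
    have -> : f' s = (p + 1) * Cp * g s `^ p - w / (q + 1) * f s.
      by rewrite -f_ode // addrK.
    have -> : g' s = (q + 1) * Cq * f s `^ q - w / (p + 1) * g s.
      by rewrite -g_ode // addrK.
    rewrite /E !powRD1 ?ode_f_gt0 ?ode_g_gt0 //.
    by field; rewrite ?gt_eqF.
  - apply: cvgM => //; exact: is_derive_cvg_right (is_derive_expRM 0 w).
by rewrite mulr0 expR0 mul1r /E; lra.
Qed.

Hypothesis pq_gt1 : 1 < p * q.
Hypothesis f0_gt_gap :
  Cq `^ (- (1 / (q + 1))) * Cp `^ (1 / (q + 1)) * g 0 `^ ((p + 1) / (q + 1)) < f 0.

Let pq1_gt0 : 0 < p * q - 1. Proof. by rewrite subr_gt0. Qed.
Let p1_ge1 : 1 <= p + 1. Proof. by rewrite lerDr ltW. Qed.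

Let K := Cq / Cp * f 0 `^ (q + 1) - g 0 `^ (p + 1).
Let u t := expR (w / (p + 1) * t) * g t + K `^ (1 / (p + 1)).
Let b := (p * q - 1) / (q + 1).
Let c := w * (p * q - 1) / ((p + 1) * (q + 1)).
Let D := (q + 1) * 2 `^ (- (p * q / (q + 1))) * Cq `^ (1 / (q + 1)) * Cp `^ (q / (q + 1)).
Let A := (Cp / Cq) `^ ((p * q - 1) / ((p + 1) * (q + 1)))
         * f 0 `^ (- ((p * q - 1) / (p + 1))).
Let B := 2 `^ (- ((p * q) / (q + 1))) * (q + 1) * (p + 1) * w^-1
         * Cq `^ (1 / (q + 1)) * Cp `^ (q / (q + 1)).

Let energy_gap_gt0 : 0 < K.
Proof.
rewrite subr_gt0; apply: (ltr_via_ln (k := q + 1) f0_gt_gap); try positivity.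
by ln_expand; field; rewrite ?gt_eqF.
Qed.

Let gap_root_powR : (K `^ (1 / (p + 1))) `^ (p + 1) = K.
Proof.
have K_ge0 := ltW energy_gap_gt0.
by rewrite -powRrM mul1r mulVf ?gt_eqF // powRr1.
Qed.

Let u_gt0 t : 0 <= t < T -> 0 < u t.
Proof.
move=> tT; apply: addr_gt0; last exact: powR_gt0 energy_gap_gt0.
by rewrite mulr_gt0 ?expR_gt0 ?ode_g_gt0.
Qed.

Let u_cvg_right0 : u x @[x --> 0^'+] --> u 0.
Proof.
apply: cvgD; last exact: cvg_cst.
apply: cvgM; first exact: is_derive_cvg_right (is_derive_expRM 0 _).
exact: C1_Ico_cvg_right0 g_C1.
Qed.

Let u_derive s : 0 < s < T ->
  is_derive s 1 u (expR (w / (p + 1) * s) * ((q + 1) * Cq * f s `^ q)).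
Proof.
move=> sT; rewrite -g_ode ?itv_ltW //.
have := is_deriveD (is_derive_expRM_mul (w / (p + 1)) (proj1 g_C1 s sT))
  (is_derive_cst (K `^ (1 / (p + 1))) s 1).
by rewrite addr0.
Qed.

Let u_powR_le t : 0 <= t < T ->
  (u t / 2) `^ (p + 1) <= Cq / Cp * f t `^ (q + 1) * expR (w * t) / 2.
Proof.
move=> tT; have g_t := ode_g_gt0 _ tT.
have weighted_powR :
    (expR (w / (p + 1) * t) * g t) `^ (p + 1) = expR (w * t) * g t `^ (p + 1).
  rewrite powRM ?expR_ge0 ?(ltW g_t) // -expRM.
  by congr (expR _ * _); field; rewrite gt_eqF.
have energy : expR (w * t) * g t `^ (p + 1) + K = Cq / Cp * f t `^ (q + 1) * expR (w * t).
  have -> : expR (w * t) * g t `^ (p + 1) = (Cq * f t `^ (q + 1) * expR (w * t)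
      - Cq * f 0 `^ (q + 1) + Cp * g 0 `^ (p + 1)) / Cp.
    by rewrite ode_energy_identity //; field; rewrite gt_eqF.
  by rewrite /K; field; rewrite gt_eqF.
rewrite /u; apply: (le_trans (powR_midpoint_convex
  (mulr_ge0 (expR_ge0 _) (ltW g_t)) (powR_ge0 _ _) p1_ge1)).
by rewrite gap_root_powR weighted_powR energy.
Qed.

Let u_growth s : 0 <= s < T ->
  D * expR (- c * s) * u s `^ (1 + b) <= expR (w / (p + 1) * s) * ((q + 1) * Cq * f s `^ q).
Proof.
move=> sT; have u_s := u_gt0 _ sT; have f_s := ode_f_gt0 _ sT.
apply: (ler_via_ln (k := q / (q + 1)) (u_powR_le _ sT)); rewrite /D; try positivity.
by ln_expand; rewrite /b /c; field; rewrite ?gt_eqF.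
Qed.

Let u0_powR_le : u 0 `^ (- b) <= A.
Proof.
have K_gt0 := energy_gap_gt0.
have gap_sum : g 0 `^ (p + 1) + K = Cq / Cp * f 0 `^ (q + 1) by rewrite /K addrC subrK.
have := powR_superadditive g0_gt0 (powR_gt0 (1 / (p + 1)) K_gt0) p1_ge1.
rewrite gap_root_powR gap_sum => /(ler_via_ln (k := b / (p + 1))).
rewrite /u /b /A mulr0 expR0 (mul1r (g 0)); apply; try positivity.
by ln_expand; field; rewrite ?gt_eqF.
Qed.

Let u_powR_decay t : 0 <= t < T -> u t `^ (- b) <= A - B * (1 - expR (- c * t)).
Proof.
move=> tT; have b_gt0 : 0 < b by rewrite /b; positivity.
have c_gt0 : 0 < c by rewrite /c; positivity.
have := bernoulli_supersolution_bound (D := D) b_gt0 c_gt0 u_gt0 u_derive u_cvg_right0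
  (fun s sT => u_growth _ (itv_ltW sT)) t tT.
have -> : b * D / c = B by rewrite /b /D /c /B; field; rewrite ?gt_eqF.
by move/le_trans; apply; rewrite lerD2r u0_powR_le.
Qed.

Let u_lower_bound t : 0 <= t < T ->
  (A - B * (1 - expR (- c * t))) `^ (- ((q + 1) / (p * q - 1))) <= u t.
Proof.
move=> tT; have decay := u_powR_decay _ tT; have u_t := u_gt0 _ tT.
have decay_gt0 := lt_le_trans (powR_gt0 (- b) u_t) decay.
apply: (ler_via_ln (k := b^-1) decay); try positivity.
by ln_expand; rewrite /b; field; rewrite ?gt_eqF.
Qed.

Lemma ode_g_lower_bound t : 0 <= t < T ->
  expR (w / (p + 1) * t) * g t >=
  ((Cp / Cq) `^ ((p * q - 1) / ((p + 1) * (q + 1))) * f 0 `^ (- ((p * q - 1) / (p + 1)))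
   - 2 `^ (- ((p * q) / (q + 1))) * (q + 1) * (p + 1) * w^-1
     * Cq `^ (1 / (q + 1)) * Cp `^ (q / (q + 1))
     * (1 - expR (- (w * (p * q - 1) / ((p + 1) * (q + 1))) * t)))
    `^ (- ((q + 1) / (p * q - 1)))
  - (Cq * Cp^-1 * f 0 `^ (q + 1) - g 0 `^ (p + 1)) `^ (1 / (p + 1)).
Proof. by move=> tT; rewrite lerBlDr; exact: u_lower_bound. Qed.

Hypothesis f0_gt_blowup :
  2 `^ ((p + 1) / (q + 1) * ((p * q) / (p * q - 1)))
  * (q + 1) `^ (- ((p + 1) / (p * q - 1)))
  * (p + 1) `^ (- ((p + 1) / (p * q - 1)))
  * w `^ ((p + 1) / (p * q - 1))
  * Cp `^ (- (1 / (p * q - 1)))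
  * Cq `^ (- (p / (p * q - 1))) < f 0.

Let A_lt_B : A < B.
Proof.
apply: (ltr_via_ln (k := (p * q - 1) / (p + 1)) f0_gt_blowup); rewrite /A /B; try positivity.
by ln_expand; field; rewrite ?gt_eqF.
Qed.

Lemma ode_lifespan_le :
  T <= - ((q + 1) * (p + 1) / (w * (p * q - 1)))
         * ln (1 - 2 `^ ((p * q) / (q + 1)) / ((q + 1) * (p + 1)) * w
                   * Cq `^ (- (p / (p + 1))) * Cp `^ (- (1 / (p + 1)))
                   * f 0 `^ (- ((p * q - 1) / (p + 1)))).
Proof.
have A_gt0 : 0 < A by rewrite /A; positivity.
have B_gt0 : 0 < B by rewrite /B; positivity.
have c_gt0 : 0 < c by rewrite /c; positivity.
have -> : 2 `^ ((p * q) / (q + 1)) / ((q + 1) * (p + 1)) * w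
          * Cq `^ (- (p / (p + 1))) * Cp `^ (- (1 / (p + 1)))
          * f 0 `^ (- ((p * q - 1) / (p + 1))) = A / B.
  apply: ln_inj; rewrite ?posrE; try positivity.
  by rewrite /A /B; ln_expand; field; rewrite ?gt_eqF.
have -> : (q + 1) * (p + 1) / (w * (p * q - 1)) = c^-1.
  by rewrite /c; field; rewrite ?gt_eqF.
apply: lifespan_le => //; first by rewrite A_gt0 A_lt_B.
by move=> t tT; exact: lt_le_trans (powR_gt0 (- b) (u_gt0 _ tT)) (u_powR_decay _ tT).
Qed.

End coupled_system.

Theorem corollary2p4 (R : realType) (f0 g0 w p q Cp Cq T : R)
  (f g f' g' : R -> R) :
  0 < f0 -> 0 < g0 -> 0 < w -> 0 < p -> 0 < q -> 1 < p * q ->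
  0 < Cp -> 0 < Cq -> 0 < T ->
  C1_Ico T f f' -> C1_Ico T g g' ->
  (forall t, 0 <= t < T -> 0 <= f t) ->
  (forall t, 0 <= t < T -> 0 <= g t) ->
  (forall t, 0 <= t < T ->
     f' t + w / (q + 1) * f t = (p + 1) * Cp * g t `^ p) ->
  (forall t, 0 <= t < T ->
     g' t + w / (p + 1) * g t = (q + 1) * Cq * f t `^ q) ->
  f 0 = f0 -> g 0 = g0 ->
  (forall t, 0 <= t < T ->
     Cq * f t `^ (q + 1) * expR (w * t) - Cq * f0 `^ (q + 1)
     = Cp * g t `^ (p + 1) * expR (w * t) - Cp * g0 `^ (p + 1)) /\
  (Num.max
     (2 `^ ((p + 1) / (q + 1) * ((p * q) / (p * q - 1)))
      * (q + 1) `^ (- ((p + 1) / (p * q - 1)))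
      * (p + 1) `^ (- ((p + 1) / (p * q - 1)))
      * w `^ ((p + 1) / (p * q - 1))
      * Cp `^ (- (1 / (p * q - 1)))
      * Cq `^ (- (p / (p * q - 1))))
     (Cq `^ (- (1 / (q + 1))) * Cp `^ (1 / (q + 1))
      * g0 `^ ((p + 1) / (q + 1)))
   < f0 ->
   (forall t, 0 <= t < T ->
      expR (w / (p + 1) * t) * g t >=
      ((Cp / Cq) `^ ((p * q - 1) / ((p + 1) * (q + 1)))
         * f0 `^ (- ((p * q - 1) / (p + 1)))
       - 2 `^ (- ((p * q) / (q + 1))) * (q + 1) * (p + 1) * w^-1
         * Cq `^ (1 / (q + 1)) * Cp `^ (q / (q + 1))
         * (1 - expR (- (w * (p * q - 1) / ((p + 1) * (q + 1))) * t)))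
        `^ (- ((q + 1) / (p * q - 1)))
      - (Cq * Cp^-1 * f0 `^ (q + 1) - g0 `^ (p + 1)) `^ (1 / (p + 1))) /\
   T <= - ((q + 1) * (p + 1) / (w * (p * q - 1)))
          * ln (1 - 2 `^ ((p * q) / (q + 1)) / ((q + 1) * (p + 1)) * w
                    * Cq `^ (- (p / (p + 1))) * Cp `^ (- (1 / (p + 1)))
                    * f0 `^ (- ((p * q - 1) / (p + 1))))).
Proof.
move=> f0_gt0 g0_gt0 w_gt0 p_gt0 q_gt0 pq_gt1 Cp_gt0 Cq_gt0 _ f_C1 g_C1 _ _.
move=> f_ode g_ode f0E g0E; subst f0 g0.
split; first by apply: ode_energy_identity; eassumption.
rewrite gt_max => /andP[f0_gt_blowup f0_gt_gap].
by split; [apply: ode_g_lower_bound | apply: ode_lifespan_le]; eassumption.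
Qed.
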